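(* Let $A$ be an associative algebra, $M$ an $A$-bimodule, $H:A\otimes A\to M$ a Hochschild $2$-cocycle, and $\{ T_\alpha : M \to A \}_{\alpha \in \Omega}$ an $H$-twisted $\mathcal{O}$-operator family. Define on $M$ the operations $u \ast_{\alpha, \beta} v = T_\alpha (u) \cdot v + u \cdot T_\beta (v) + H (T_\alpha (u), T_\beta (v))$, and define bilinear maps $\triangleright_{\alpha,\beta}: M\otimes A\to A$, $\triangleleft_{\alpha,\beta}: A\otimes M\to A$ by $$u \triangleright_{\alpha, \beta} a := T_\alpha (u) \cdot a - T_{\alpha \beta} (u \cdot a) - T_{\alpha \beta} \big( H (T_\alpha (u), a) \big),\qquad a \triangleleft_{\alpha, \beta} u := a \cdot T_\beta (u) - T_{\alpha \beta} (a \cdot u) - T_{\alpha \beta} \big( H (a, T_\beta (u)) \big).$$ Then $(M,\{\ast_{\alpha,\beta}\}_{\alpha,\beta\in\Omega})$ is an $\Omega$-associative algebra and $(A, \{ \triangleright_{\alpha, \beta}, \triangleleft_{\alpha, \beta} \}_{\alpha, \beta \in \Omega})$ is a bimodule over it (with $\triangleright$ the left action and $\triangleleft$ the right action).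
   Context: $\Omega$ is a semigroup. A Hochschild $2$-cocycle is a bilinear $H$ with $a \cdot H (b, c) - H ( a \cdot b, c)+ H (a, b \cdot c) - H (a, b) \cdot c =0$. An $H$-twisted $\mathcal{O}$-operator family: linear maps $T_\alpha:M\to A$ with $T_\alpha (u) \cdot T_\beta (v) = T_{\alpha \beta} \big( T_\alpha (u) \cdot v + u \cdot T_\beta (v) + H (T_\alpha (u), T_\beta (v)) \big)$ for all $u,v,\alpha,\beta$. An $\Omega$-associative algebra is a vector space $B$ with bilinear maps $\{\cdot_{\alpha,\beta}\}_{\alpha,\beta\in\Omega}$ with $(a \cdot_{\alpha , \beta} b) \cdot_{\alpha \beta, \gamma} c = a \cdot_{\alpha, \beta \gamma} (b \cdot_{\beta, \gamma} c)$ for all $a,b,c$, $\alpha,\beta,\gamma$. A bimodule over it is a vector space $N$ with bilinear maps $B\otimes N\to N$, $(a,n)\mapsto a\cdot_{\alpha,\beta}n$ and $N\otimes B\to N$, $(n,a)\mapsto n\cdot_{\alpha,\beta}a$ ($\alpha,\beta\in\Omega$) such that $(a \cdot_{\alpha , \beta} b) \cdot_{\alpha \beta, \gamma} n = a \cdot_{\alpha, \beta \gamma} (b \cdot_{\beta, \gamma} n)$, $(a \cdot_{\alpha , \beta} n) \cdot_{\alpha \beta, \gamma} b = a \cdot_{\alpha, \beta \gamma} (n \cdot_{\beta, \gamma} b)$, $(n \cdot_{\alpha , \beta} a) \cdot_{\alpha \beta, \gamma} b = n \cdot_{\alpha, \beta \gamma} (a \cdot_{\beta, \gamma} b)$. 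*)

(* Vector spaces over a field K are lmodType K; algebra and
   module products are given as explicit bilinear maps (algebras need not be
   unital). *)
From mathcomp Require Import all_boot all_order all_algebra.
Set Implicit Arguments. Unset Strict Implicit. Unset Printing Implicit Defensive.
Import GRing.Theory.
Local Open Scope ring_scope.

Definition bilinear_map (K : fieldType) (U V W : lmodType K) (f : U -> V -> W) : Prop :=
  (forall (k : K) (x y : U) (z : V), f (k *: x + y) z = k *: f x z + f y z) /\
  (forall (k : K) (x : U) (y z : V), f x (k *: y + z) = k *: f x y + f x z).

Definition linear_map (K : fieldType) (U V : lmodType K) (f : U -> V) : Prop :=
  forall (k : K) (x y : U), f (k *: x + y) = k *: f x + f y.

Definition assoc_algebra (K : fieldType) (A : lmodType K) (mul : A -> A -> A) : Prop :=
  bilinear_map mul /\ forall a b c, mul (mul a b) c = mul a (mul b c).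

Definition bimodule (K : fieldType) (A M : lmodType K) (mul : A -> A -> A)
  (l : A -> M -> M) (r : M -> A -> M) : Prop :=
  [/\ bilinear_map l, bilinear_map r,
      (forall a b m, l (mul a b) m = l a (l b m)),
      (forall a m b, r (l a m) b = l a (r m b)) &
      (forall m a b, r (r m a) b = r m (mul a b))].

Definition hochschild_2cocycle (K : fieldType) (A M : lmodType K) (mul : A -> A -> A)
  (l : A -> M -> M) (r : M -> A -> M) (H : A -> A -> M) : Prop :=
  bilinear_map H /\
  forall a b c, l a (H b c) - H (mul a b) c + H a (mul b c) - r (H a b) c = 0.

Definition semigroup_op (Omega : Type) (op : Omega -> Omega -> Omega) : Prop :=
  forall x y z, op (op x y) z = op x (op y z).

Definition twisted_O_family (K : fieldType) (A M : lmodType K) (Omega : Type)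
  (op : Omega -> Omega -> Omega) (mul : A -> A -> A)
  (l : A -> M -> M) (r : M -> A -> M) (H : A -> A -> M) (T : Omega -> M -> A) : Prop :=
  (forall al, linear_map (T al)) /\
  forall (al be : Omega) (u v : M),
    mul (T al u) (T be v) = T (op al be) (l (T al u) v + r u (T be v) + H (T al u) (T be v)).

Definition Omega_assoc_algebra (K : fieldType) (B : lmodType K) (Omega : Type)
  (op : Omega -> Omega -> Omega) (m : Omega -> Omega -> B -> B -> B) : Prop :=
  (forall al be, bilinear_map (m al be)) /\
  forall al be ga a b c, m (op al be) ga (m al be a b) c = m al (op be ga) a (m be ga b c).

Definition Omega_bimodule (K : fieldType) (B N : lmodType K) (Omega : Type)
  (op : Omega -> Omega -> Omega) (m : Omega -> Omega -> B -> B -> B)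
  (l : Omega -> Omega -> B -> N -> N) (r : Omega -> Omega -> N -> B -> N) : Prop :=
  [/\ (forall al be, bilinear_map (l al be)), (forall al be, bilinear_map (r al be)),
      (forall al be ga (a b : B) (n : N),
          l (op al be) ga (m al be a b) n = l al (op be ga) a (l be ga b n)),
      (forall al be ga (a : B) (n : N) (b : B),
          r (op al be) ga (l al be a n) b = l al (op be ga) a (r be ga n b)) &
      (forall al be ga (n : N) (a b : B),
          r (op al be) ga (r al be n a) b = r al (op be ga) n (m be ga a b))].

Definition ast (K : fieldType) (A M : lmodType K) (Omega : Type)
  (l : A -> M -> M) (r : M -> A -> M) (H : A -> A -> M) (T : Omega -> M -> A)
  (al be : Omega) (u v : M) : M :=
  l (T al u) v + r u (T be v) + H (T al u) (T be v).

Definition tri (K : fieldType) (A M : lmodType K) (Omega : Type)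
  (op : Omega -> Omega -> Omega) (mul : A -> A -> A)
  (r : M -> A -> M) (H : A -> A -> M) (T : Omega -> M -> A)
  (al be : Omega) (u : M) (a : A) : A :=
  mul (T al u) a - T (op al be) (r u a) - T (op al be) (H (T al u) a).

Definition tle (K : fieldType) (A M : lmodType K) (Omega : Type)
  (op : Omega -> Omega -> Omega) (mul : A -> A -> A)
  (l : A -> M -> M) (H : A -> A -> M) (T : Omega -> M -> A)
  (al be : Omega) (a : A) (u : M) : A :=
  mul a (T be u) - T (op al be) (l a u) - T (op al be) (H a (T be u)).

(* Glue A and M into the H-twisted semidirect product E = A ⊕ M, with
   (a, u)(b, v) = (ab, a v + u b + H(a, b)); it is associative exactly because
   H is a Hochschild 2-cocycle.  The O-operator identity says that the graphs
   u ↦ (T_α u, u) multiply as g_α(u) g_β(v) = g_{αβ}(u ∗_{α,β} v), so the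
   Ω-associativity of ∗ is the associativity of E read on second components.
   Both actions on A are p_{αβ}(g_α(u)(a, 0)) and p_{αβ}((a, 0) g_β(u)) for the
   projection p_γ(b, w) = b - T_γ w, which kills the graph of T_γ; every x in E
   splits as (p_γ x, 0) + g_γ(x.2), and the bimodule identities again follow
   from the associativity of E. *)
From mathcomp Require Import all_boot all_order all_algebra.
Set Implicit Arguments. Unset Strict Implicit. Unset Printing Implicit Defensive.
Import GRing.Theory.
Local Open Scope ring_scope.

Section LinearMaps.
Variable K : fieldType.
Implicit Types U V W X Y Z : lmodType K.

Lemma linear_mapD U V (f : U -> V) : linear_map f -> {morph f : x y / x + y}.
Proof. by move=> fL x y; rewrite -[x]scale1r fL !scale1r. Qed.

Lemma linear_map0 U V (f : U -> V) : linear_map f -> f 0 = 0.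
Proof. by move=> fL; apply: (addIr (f 0)); rewrite -linear_mapD // !add0r. Qed.

Lemma bilinear_mapDl U V W (f : U -> V -> W) : bilinear_map f ->
  forall x y z, f (x + y) z = f x z + f y z.
Proof.
case=> fL _ x y z.
exact: (linear_mapD (f := f^~ z) (fun k x y => fL k x y z)).
Qed.

Lemma bilinear_mapDr U V W (f : U -> V -> W) : bilinear_map f ->
  forall x y z, f x (y + z) = f x y + f x z.
Proof. by case=> _ fR x; exact: (linear_mapD (fR ^~ x)). Qed.

Lemma bilinear_map0l U V W (f : U -> V -> W) :
  bilinear_map f -> forall z, f 0 z = 0.
Proof.
by case=> fL _ z; exact: (linear_map0 (f := f^~ z) (fun k x y => fL k x y z)).
Qed.

Lemma bilinear_map0r U V W (f : U -> V -> W) :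
  bilinear_map f -> forall x, f x 0 = 0.
Proof. by case=> _ fR x; exact: (linear_map0 (fR ^~ x)). Qed.

Lemma pairD U V (x y : U) (u v : V) : (x, u) + (y, v) = (x + y, u + v) :> U * V.
Proof. by []. Qed.

Lemma pair_scaleD U V k (x y : U) (u v : V) :
  k *: (x, u) + (y, v) = (k *: x + y, k *: u + v) :> U * V.
Proof. by []. Qed.

Lemma bilinear_mapD U V W (f g : U -> V -> W) :
  bilinear_map f -> bilinear_map g -> bilinear_map (fun x y => f x y + g x y).
Proof.
by move=> [fL fR] [gL gR]; split=> *; rewrite (fL, fR) (gL, gR) scalerDr addrACA.
Qed.

Lemma bilinear_map_pair U V W X (f : U -> V -> W) (g : U -> V -> X) :
  bilinear_map f -> bilinear_map g -> bilinear_map (fun x y => (f x y, g x y)).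
Proof.
by move=> [fL fR] [gL gR]; split=> *; rewrite (fL, fR) (gL, gR) pair_scaleD.
Qed.

Lemma fst_linear U V : linear_map (@fst U V).
Proof. by []. Qed.

Lemma snd_linear U V : linear_map (@snd U V).
Proof. by []. Qed.

Lemma eq_bilinear_map U V W (f g : U -> V -> W) :
  f =2 g -> bilinear_map f -> bilinear_map g.
Proof. by move=> fg [fL fR]; split=> *; rewrite -!fg. Qed.

Lemma bilinear_map_precomp U V W X Y (f : X -> Y -> W) (phi : U -> X)
    (psi : V -> Y) :
  bilinear_map f -> linear_map phi -> linear_map psi ->
  bilinear_map (fun x y => f (phi x) (psi y)).
Proof. by move=> [fL fR] phiL psiL; split=> *; rewrite ?phiL ?psiL (fL, fR). Qed.

Lemma bilinear_map_postcomp U V W X (chi : W -> X) (f : U -> V -> W) :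
  linear_map chi -> bilinear_map f -> bilinear_map (fun x y => chi (f x y)).
Proof. by move=> chiL [fL fR]; split=> *; rewrite (fL, fR) chiL. Qed.

End LinearMaps.

Section TwistedSemidirectProduct.
Variable K : fieldType.
Variables A M : lmodType K.
Variables (mul : A -> A -> A) (l : A -> M -> M) (r : M -> A -> M).
Variable H : A -> A -> M.

Hypothesis A_algebra : assoc_algebra mul.
Hypothesis M_bimodule : bimodule mul l r.
Hypothesis H_2cocycle : hochschild_2cocycle mul l r H.

Let mulB : bilinear_map mul := A_algebra.1.
Let mulA : forall a b c, mul (mul a b) c = mul a (mul b c) := A_algebra.2.
Let HB : bilinear_map H := H_2cocycle.1.
Let H_cocycle :
  forall a b c, l a (H b c) - H (mul a b) c + H a (mul b c) - r (H a b) c = 0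
  := H_2cocycle.2.
Let lB : bilinear_map l. Proof. by case: M_bimodule. Qed.
Let rB : bilinear_map r. Proof. by case: M_bimodule. Qed.
Let l_mul a b u : l (mul a b) u = l a (l b u). Proof. by case: M_bimodule. Qed.
Let r_l a u b : r (l a u) b = l a (r u b). Proof. by case: M_bimodule. Qed.
Let r_mul u a b : r (r u a) b = r u (mul a b). Proof. by case: M_bimodule. Qed.

Definition sdmul (x y : A * M) : A * M :=
  (mul x.1 y.1, l x.1 y.2 + r x.2 y.1 + H x.1 y.1).

Lemma sdmul_bilinear : bilinear_map sdmul.
Proof.
have [fstL sndL] := (@fst_linear _ A M, @snd_linear _ A M).
apply: bilinear_map_pair; first exact: bilinear_map_precomp.
by do 2?apply: bilinear_mapD; apply: bilinear_map_precomp.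
Qed.

Lemma sdmulDl x y z : sdmul (x + y) z = sdmul x z + sdmul y z.
Proof. exact: (bilinear_mapDl (U := (A * M)%type) sdmul_bilinear). Qed.

Lemma sdmulDr x y z : sdmul x (y + z) = sdmul x y + sdmul x z.
Proof. exact: (bilinear_mapDr (U := (A * M)%type) sdmul_bilinear). Qed.

Lemma sdmulA : associative sdmul.
Proof.
move=> [a u] [b v] [c w]; congr (_, _); rewrite /= ?mulA //.
rewrite !(bilinear_mapDl rB, bilinear_mapDr lB) l_mul r_l r_mul -!addrA.
have cocycle : l a (H b c) + H a (mul b c) = r (H a b) c + H (mul a b) c.
  by have /eqP := H_cocycle a b c; rewrite subr_eq0 addrAC subr_eq => /eqP.
by do 2!congr (_ + _); rewrite addrCA cocycle.
Qed.

Section OperatorFamily.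
Variables (Omega : Type) (op : Omega -> Omega -> Omega) (T : Omega -> M -> A).
Hypothesis op_semigroup : semigroup_op op.
Hypothesis T_twisted_O : twisted_O_family op mul l r H T.

Let opA : forall al be ga, op (op al be) ga = op al (op be ga) := op_semigroup.
Let T_linear : forall al, linear_map (T al) := T_twisted_O.1.
Let T_O al be u v :
  mul (T al u) (T be v) = T (op al be) (ast l r H T al be u v) :=
  T_twisted_O.2 al be u v.

Definition graph al u : A * M := (T al u, u).

Definition proj ga (x : A * M) : A := x.1 - T ga x.2.

Lemma graph_linear al : linear_map (graph al).
Proof. by move=> k u v; rewrite /graph T_linear pair_scaleD. Qed.

Lemma proj_linear ga : linear_map (proj ga).
Proof. by move=> k x y; rewrite /proj T_linear scalerBr opprD addrACA. Qed.

Lemma pairr0_linear : linear_map (fun a : A => (a, 0 : M)).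
Proof. by move=> k a b; rewrite pair_scaleD scaler0 addr0. Qed.

Lemma graph_mul al be u v :
  sdmul (graph al u) (graph be v) = graph (op al be) (ast l r H T al be u v).
Proof. by rewrite /sdmul /= T_O. Qed.

Lemma proj_graph ga u : proj ga (graph ga u) = 0.
Proof. exact: subrr. Qed.

Lemma decompose_graph ga x : x = (proj ga x, 0) + graph ga x.2.
Proof. by case: x => a u; rewrite /proj /graph /= pairD subrK add0r. Qed.

Lemma ast_bilinear al be : bilinear_map (ast l r H T al be).
Proof.
exact: (bilinear_map_postcomp (@snd_linear _ A M)
  (bilinear_map_precomp sdmul_bilinear (graph_linear al) (graph_linear be))).
Qed.

Lemma ast_assoc al be ga u v w :
  ast l r H T (op al be) ga (ast l r H T al be u v) w =
  ast l r H T al (op be ga) u (ast l r H T be ga v w).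
Proof.
have := sdmulA (graph al u) (graph be v) (graph ga w).
by rewrite !graph_mul opA => /(congr1 snd) /= ->.
Qed.

Lemma proj_mul_graphl al de u x :
  proj (op al de) (sdmul (graph al u) x) =
  proj (op al de) (sdmul (graph al u) (proj de x, 0)).
Proof.
rewrite {1}(decompose_graph de x) sdmulDr graph_mul.
by rewrite (linear_mapD (proj_linear _)) proj_graph addr0.
Qed.

Lemma proj_mul_graphr de be x u :
  proj (op de be) (sdmul x (graph be u)) =
  proj (op de be) (sdmul (proj de x, 0) (graph be u)).
Proof.
rewrite {1}(decompose_graph de x) sdmulDl graph_mul.
by rewrite (linear_mapD (proj_linear _)) proj_graph addr0.
Qed.

Lemma tri_proj al be u a :
  tri op mul r H T al be u a = proj (op al be) (sdmul (graph al u) (a, 0)).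
Proof.
rewrite /tri /proj /sdmul /= (bilinear_map0r lB) add0r.
by rewrite (linear_mapD (T_linear _)) opprD addrA.
Qed.

Lemma tle_proj al be a u :
  tle op mul l H T al be a u = proj (op al be) (sdmul (a, 0) (graph be u)).
Proof.
rewrite /tle /proj /sdmul /= (bilinear_map0l rB) addr0.
by rewrite (linear_mapD (T_linear _)) opprD addrA.
Qed.

Lemma tri_bilinear al be : bilinear_map (tri op mul r H T al be).
Proof.
apply: (eq_bilinear_map (fun u a => esym (tri_proj al be u a))).
exact: (bilinear_map_postcomp (proj_linear _)
  (bilinear_map_precomp sdmul_bilinear (graph_linear al) pairr0_linear)).
Qed.

Lemma tle_bilinear al be : bilinear_map (tle op mul l H T al be).
Proof.
apply: (eq_bilinear_map (fun a u => esym (tle_proj al be a u))).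
exact: (bilinear_map_postcomp (proj_linear _)
  (bilinear_map_precomp sdmul_bilinear pairr0_linear (graph_linear be))).
Qed.

Lemma tri_ast al be ga u v a :
  tri op mul r H T (op al be) ga (ast l r H T al be u v) a =
  tri op mul r H T al (op be ga) u (tri op mul r H T be ga v a).
Proof. by rewrite !tri_proj -graph_mul -sdmulA opA proj_mul_graphl. Qed.

Lemma tle_tri al be ga u a w :
  tle op mul l H T (op al be) ga (tri op mul r H T al be u a) w =
  tri op mul r H T al (op be ga) u (tle op mul l H T be ga a w).
Proof.
rewrite !tri_proj !tle_proj -proj_mul_graphr -sdmulA opA.
exact: proj_mul_graphl.
Qed.

Lemma tle_ast al be ga a u v :
  tle op mul l H T (op al be) ga (tle op mul l H T al be a u) v =
  tle op mul l H T al (op be ga) a (ast l r H T be ga u v).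
Proof. by rewrite !tle_proj -proj_mul_graphr -sdmulA graph_mul opA. Qed.

Lemma ast_Omega_assoc_algebra : Omega_assoc_algebra op (ast l r H T).
Proof. by split; [exact: ast_bilinear | exact: ast_assoc]. Qed.

Lemma tri_tle_Omega_bimodule :
  Omega_bimodule op (ast l r H T) (tri op mul r H T) (tle op mul l H T).
Proof.
by split; [exact: tri_bilinear | exact: tle_bilinear | exact: tri_ast |
           exact: tle_tri | exact: tle_ast].
Qed.

End OperatorFamily.

End TwistedSemidirectProduct.

Theorem theorem4p4 (K : fieldType) (A M : lmodType K) (Omega : Type)
  (op : Omega -> Omega -> Omega) (mul : A -> A -> A)
  (l : A -> M -> M) (r : M -> A -> M) (H : A -> A -> M) (T : Omega -> M -> A) :
  semigroup_op op ->
  assoc_algebra mul ->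
  bimodule mul l r ->
  hochschild_2cocycle mul l r H ->
  twisted_O_family op mul l r H T ->
  Omega_assoc_algebra op (ast l r H T) /\
  Omega_bimodule op (ast l r H T) (tri op mul r H T) (tle op mul l H T).
Proof.
move=> op_semigroup A_algebra M_bimodule H_2cocycle T_twisted_O; split.
- exact: (ast_Omega_assoc_algebra A_algebra M_bimodule H_2cocycle
            op_semigroup T_twisted_O).
- exact: (tri_tle_Omega_bimodule A_algebra M_bimodule H_2cocycle
            op_semigroup T_twisted_O).
Qed.
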